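(* For every $N=3,4,\dots$ and all pairwise distinct indices $\alpha,\beta,\gamma$ (with associated nonzero complex variables $\xi_\alpha,\xi_\beta,\xi_\gamma$ at which all quantities are defined), the $N^2\times N^2$ matrices $\mathbf{R}$ satisfy (a) $(\mathbf{R}_{\beta\alpha}\otimes\mathbf{I}_N)(\mathbf{R}_{\alpha\beta}\otimes\mathbf{I}_N)=(\mathbf{I}_N\otimes\mathbf{R}_{\beta\alpha})(\mathbf{I}_N\otimes\mathbf{R}_{\alpha\beta})=\mathbf{I}_{N^3}$; (b) (Yang–Baxter equation) $(\mathbf{R}_{\gamma\beta}\otimes\mathbf{I}_N)(\mathbf{I}_N\otimes\mathbf{R}_{\gamma\alpha})(\mathbf{R}_{\beta\alpha}\otimes\mathbf{I}_N)=(\mathbf{I}_N\otimes\mathbf{R}_{\beta\alpha})(\mathbf{R}_{\gamma\alpha}\otimes\mathbf{I}_N)(\mathbf{I}_N\otimes\mathbf{R}_{\gamma\beta})$.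
   Context: Fix $0<p<1$, $q=1-p$. For nonzero complex $\xi_\alpha,\xi_\beta$ set $D=p+q\xi_\alpha\xi_\beta-\xi_\alpha$ and $S_{\beta\alpha}=-\frac{p+q\xi_\alpha\xi_\beta-\xi_\beta}{D}$, $P_{\beta\alpha}=\frac{(p-q\xi_\alpha)(\xi_\beta-1)}{D}$, $Q_{\beta\alpha}=\frac{(p-q\xi_\beta)(\xi_\alpha-1)}{D}$, $T_{\beta\alpha}=\frac{\xi_\beta-\xi_\alpha}{D}$. $\mathbf{R}_{\beta\alpha}$ is the $N^2\times N^2$ matrix with rows and columns indexed by two-letter words $ij$ over $\{1,\dots,N\}$ in lexicographic order, with entries $[\mathbf{R}_{\beta\alpha}]_{ij,kl}=S_{\beta\alpha}$ if $kl=ij$, $i=j$; $P_{\beta\alpha}$ if $kl=ij$, $i<j$; $Q_{\beta\alpha}$ if $kl=ij$, $i>j$; $pT_{\beta\alpha}$ if $kl=ji$, $i<j$; $qT_{\beta\alpha}$ if $kl=ji$, $i>j$; and $0$ otherwise. $\otimes$ is the Kronecker product, with rows/columns of $N^3\times N^3$ matrices indexed by three-letter words in lexicographic order. *)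

From HB Require Import structures.
From mathcomp Require Import all_boot all_order all_algebra.
From mathcomp Require Import complex.
Set Implicit Arguments. Unset Strict Implicit. Unset Printing Implicit Defensive.
Import Order.TTheory GRing.Theory Num.Theory.
Local Open Scope ring_scope.

Section Defs.
Variable F : nzRingType.

(* entry of a matrix addressed by natural-number indices (0 outside range) *)
Definition mxnat {m n : nat} (A : 'M[F]_(m, n)) (r c : nat) : F :=
  match @insub _ (fun k => k < m)%N 'I_m r, @insub _ (fun k => k < n)%N 'I_n c with
  | Some i, Some j => A i j
  | _, _ => 0
  end.

Definition kron {m1 n1 m2 n2 : nat} (A : 'M[F]_(m1, n1)) (B : 'M[F]_(m2, n2))
  : 'M[F]_(m1 * m2, n1 * n2) :=
  \matrix_(i, j) (mxnat A (i %/ m2) (j %/ n2) * mxnat B (i %% m2) (j %% n2)).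
End Defs.

Section RMatrix.
Variable R : rcfType.
Local Notation C := (R[i]).

(* p is real, q = 1 - p; xa = xi_alpha, xb = xi_beta *)
Definition Dden (p : R) (xa xb : C) : C := (p%:C)%C + ((1 - p)%:C)%C * xa * xb - xa.
Definition Scoef (p : R) (xb xa : C) : C :=
  - (((p%:C)%C + ((1 - p)%:C)%C * xa * xb - xb) / Dden p xa xb).
Definition Pcoef (p : R) (xb xa : C) : C :=
  ((p%:C)%C - ((1 - p)%:C)%C * xa) * (xb - 1) / Dden p xa xb.
Definition Qcoef (p : R) (xb xa : C) : C :=
  ((p%:C)%C - ((1 - p)%:C)%C * xb) * (xa - 1) / Dden p xa xb.
Definition Tcoef (p : R) (xb xa : C) : C := (xb - xa) / Dden p xa xb.

(* R_{beta alpha} (Rmx p N xb xa); row index a encodes the word ij with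
   a = i*N + j (i = a %/ N, j = a %% N), i.e. lexicographic order,
   letters 1..N shifted to 0..N-1 *)
Definition Rmx (p : R) (N : nat) (xb xa : C) : 'M[C]_(N * N) :=
  \matrix_(a, b)
    let i := (a %/ N)%N in let j := (a %% N)%N in
    let k := (b %/ N)%N in let l := (b %% N)%N in
    if (k == i) && (l == j) then
      (if i == j then Scoef p xb xa
       else if (i < j)%N then Pcoef p xb xa else Qcoef p xb xa)
    else if (k == j) && (l == i) then
      (if (i < j)%N then (p%:C)%C * Tcoef p xb xa else ((1 - p)%:C)%C * Tcoef p xb xa)
    else 0.
End RMatrix.

(* A column of an N^3 x N^3 matrix is a function of the three-letter word indexing its
   rows.  Multiplying by R ⊗ I (resp. I ⊗ R) acts on such a function through the first two
   (resp. last two) letters only: it mixes the value at abc with the value at bac (resp. acb),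
   with coefficients depending only on the relative order of the two letters.  Unitarity
   and the Yang-Baxter equation thereby reduce to identities between rational functions
   of the spectral variables, one for each relative order of at most three letters. *)

From HB Require Import structures.
From mathcomp Require Import all_boot all_order all_algebra.
From mathcomp Require Import complex.
From mathcomp Require Import ring zify.
Set Implicit Arguments. Unset Strict Implicit. Unset Printing Implicit Defensive.
Import Order.TTheory GRing.Theory Num.Theory.

Lemma divnMDl_small d q r : r < d -> (q * d + r) %/ d = q.
Proof. by move=> lt_rd; rewrite /divn edivn_eq. Qed.

Lemma modnMDl_small d q r : r < d -> (q * d + r) %% d = r.
Proof. by move=> lt_rd; rewrite modn_def edivn_eq. Qed.

Lemma ltn_mulDl m n q r : q < m -> r < n -> q * n + r < m * n.
Proof. by move=> *; nia. Qed.

Section Words.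
Variable N : nat.

Definition idx3 (a b c : 'I_N) : nat := (a * N + b) * N + c.

Lemma idx3_lt a b c : idx3 a b c < N * N * N.
Proof. by rewrite /idx3 !ltn_mulDl. Qed.

Lemma idx3_divN a b c : idx3 a b c %/ N = a * N + b.
Proof. exact: divnMDl_small. Qed.

Lemma idx3_modN a b c : idx3 a b c %% N = c.
Proof. exact: modnMDl_small. Qed.

Lemma idx3_divNN a b c : idx3 a b c %/ (N * N) = a.
Proof. by rewrite divnMA idx3_divN divnMDl_small. Qed.

Lemma idx3_modNN a b c : idx3 a b c %% (N * N) = b * N + c.
Proof. by rewrite /idx3 mulnDl -mulnA -addnA modnMDl_small // ltn_mulDl. Qed.

Lemma eq_idx3 a b c a' b' c' :
  (idx3 a b c == idx3 a' b' c') = [&& a == a' :> nat, b == b' :> nat & c == c' :> nat].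
Proof.
apply/eqP/and3P => [e|[/eqP ea /eqP eb /eqP ec]]; last by rewrite /idx3 ea eb ec.
have := congr1 (modn^~ N) e; have := congr1 (divn^~ N) e.
rewrite /= !idx3_modN !idx3_divN => e_ab ->.
have := congr1 (modn^~ N) e_ab; have := congr1 (divn^~ N) e_ab.
by rewrite /= !divnMDl_small // !modnMDl_small // => -> ->.
Qed.

Lemma idx3P x : x < N * N * N -> exists a b c, x = idx3 a b c.
Proof.
move=> lt_x; have N_gt0 : 0 < N by case: N lt_x.
have lt_a : x %/ N %/ N < N by rewrite !ltn_divLR // -mulnA mulnC mulnA.
exists (Ordinal lt_a), (Ordinal (ltn_pmod (x %/ N) N_gt0)), (Ordinal (ltn_pmod x N_gt0)).
by rewrite /idx3 /= -!divn_eq.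
Qed.

End Words.

Local Open Scope ring_scope.

Section MatrixEntries.
Variable F : nzRingType.

Lemma mxnatE m n (A : 'M[F]_(m, n)) (i : 'I_m) (j : 'I_n) : mxnat A i j = A i j.
Proof.
rewrite /mxnat; case: insubP => [i' _ ei|]; last by rewrite ltn_ord.
case: insubP => [j' _ ej|]; last by rewrite ltn_ord.
by congr (A _ _); apply: val_inj.
Qed.

Lemma mxnat_lt m n (A : 'M[F]_(m, n)) r c (lt_r : (r < m)%N) (lt_c : (c < n)%N) :
  mxnat A r c = A (Ordinal lt_r) (Ordinal lt_c).
Proof. exact: (mxnatE A (Ordinal lt_r) (Ordinal lt_c)). Qed.

Lemma mxnat_mul m n k (A : 'M[F]_(m, n)) (B : 'M[F]_(n, k)) r c :
  (r < m)%N -> (c < k)%N ->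
  mxnat (A *m B) r c = \sum_(z < n) mxnat A r z * mxnat B z c.
Proof.
move=> lt_r lt_c; rewrite (mxnat_lt _ lt_r lt_c) mxE.
by apply: eq_bigr => z _; rewrite -(mxnatE A) -(mxnatE B).
Qed.

Lemma mxnat_kron m1 n1 m2 n2 (A : 'M[F]_(m1, n1)) (B : 'M[F]_(m2, n2)) r c :
  (r < m1 * m2)%N -> (c < n1 * n2)%N ->
  mxnat (kron A B) r c = mxnat A (r %/ m2) (c %/ n2) * mxnat B (r %% m2) (c %% n2).
Proof. by move=> lt_r lt_c; rewrite (mxnat_lt _ lt_r lt_c) mxE. Qed.

Lemma mxnat1 n r c : (r < n)%N -> (c < n)%N -> mxnat (1%:M : 'M[F]_n) r c = (r == c)%:R.
Proof. by move=> lt_r lt_c; rewrite (mxnat_lt _ lt_r lt_c) mxE. Qed.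

Lemma mxnat_castmx m n m' n' (e : (m = m') * (n = n')) (A : 'M[F]_(m, n)) r c :
  mxnat (castmx e A) r c = mxnat A r c.
Proof. by case: e => em en; case: m' / em; case: n' / en; rewrite castmx_id. Qed.

Lemma mulmx_castmx m n m' n' k (e : (m = m') * (n = n')) (A : 'M[F]_(m, n))
    (B : 'M[F]_(n', k)) :
  castmx e A *m B = castmx (e.1, erefl) (A *m castmx (esym e.2, erefl) B).
Proof. by case: e => em en; case: m' / em; case: n' / en in B *; rewrite !castmx_id. Qed.

Lemma sum_delta_nat n r (G : nat -> F) : (r < n)%N ->
  \sum_(z < n) (z == r :> nat)%:R * G z = G r.
Proof.
move=> lt_r; rewrite (bigD1 (Ordinal lt_r)) //= eqxx mul1r big1 ?addr0 // => z ne_z.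
by move: ne_z; rewrite -val_eqE /= => /negbTE->; rewrite mul0r.
Qed.

End MatrixEntries.

Section WordColumns.
Variables (F : nzRingType) (N : nat).

Definition mxword m k (M : 'M[F]_(m, k)) (y : nat) (a b c : 'I_N) : F :=
  mxnat M (idx3 a b c) y.

Definition wdelta (y : nat) (a b c : 'I_N) : F := (y == idx3 a b c)%:R.

Lemma mxword_castmx m n m' n' (e : (m = m') * (n = n')) (A : 'M[F]_(m, n)) y a b c :
  mxword (castmx e A) y a b c = mxword A y a b c.
Proof. by rewrite /mxword mxnat_castmx. Qed.

Lemma mxword1 m y a b c : m = (N * N * N)%N -> (y < m)%N ->
  mxword (1%:M : 'M[F]_m) y a b c = wdelta y a b c.
Proof. by move=> -> lt_y; rewrite /mxword mxnat1 ?idx3_lt // eq_sym. Qed.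

Lemma eq_mx_word m k (A B : 'M[F]_(m, k)) : m = (N * N * N)%N ->
  (forall y, (y < k)%N -> forall a b c, mxword A y a b c = mxword B y a b c) -> A = B.
Proof.
move=> em eqAB; apply/matrixP => r y; rewrite -(mxnatE A) -(mxnatE B).
have [a [b [c ->]]] : exists a b c : 'I_N, r = idx3 a b c :> nat.
  by apply: idx3P; rewrite -em.
exact: eqAB.
Qed.

End WordColumns.

Arguments wdelta {F N} y a b c.

Section TwoLetterAction.
Variables (R : rcfType) (p : R) (N : nat).
Local Notation C := R[i].

Definition Rstay (xb xa : C) (i j : nat) : C :=
  if i == j then Scoef p xb xa else if (i < j)%N then Pcoef p xb xa else Qcoef p xb xa.

Definition Rswap (xb xa : C) (i j : nat) : C :=
  if (i < j)%N then (p%:C)%C * Tcoef p xb xa else ((1 - p)%:C)%C * Tcoef p xb xa.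

(* The vector [Rmx p N xb xa *m h] of a vector [h] indexed by two-letter words:
   row [ij] of the R-matrix has [Rstay] in column [ij] and, if [i != j], [Rswap]
   in column [ji]. *)
Definition Rapply (xb xa : C) (h : 'I_N -> 'I_N -> C) (i j : 'I_N) : C :=
  Rstay xb xa i j * h i j + (if i != j :> nat then Rswap xb xa i j * h j i else 0).

Definition R12 (xb xa : C) (g : 'I_N -> 'I_N -> 'I_N -> C) (a b c : 'I_N) : C :=
  Rapply xb xa (fun i j => g i j c) a b.

Definition R23 (xb xa : C) (g : 'I_N -> 'I_N -> 'I_N -> C) (a b c : 'I_N) : C :=
  Rapply xb xa (g a) b c.

Lemma eq_Rapply xb xa (h h' : 'I_N -> 'I_N -> C) i j :
  h =2 h' -> Rapply xb xa h i j = Rapply xb xa h' i j.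
Proof. by move=> eq_h; rewrite /Rapply !eq_h. Qed.

Lemma Rapply_mulr xb xa h (s : C) i j :
  Rapply xb xa h i j * s = Rapply xb xa (fun i' j' => h i' j' * s) i j.
Proof. by rewrite /Rapply mulrDl; case: ifP; rewrite ?mul0r -!mulrA. Qed.

Lemma Rapply_sum (I : Type) (r : seq I) (P : pred I) xb xa
    (h : I -> 'I_N -> 'I_N -> C) (G : I -> C) i j :
  \sum_(z <- r | P z) Rapply xb xa (h z) i j * G z =
  Rapply xb xa (fun i' j' => \sum_(z <- r | P z) h z i' j' * G z) i j.
Proof.
rewrite /Rapply; case: ifP => _.
  by rewrite !mulr_sumr -big_split; apply: eq_bigr => z _; rewrite mulrDl !mulrA.
by rewrite addr0 mulr_sumr; apply: eq_bigr => z _; rewrite addr0 mulrA.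
Qed.

Lemma complex1B : ((1 - p)%:C)%C = 1 - (p%:C)%C :> C.
Proof. by rewrite rmorphB rmorph1. Qed.

Local Ltac decide_cmp :=
  repeat match goal with
  | |- context [(?u < ?v)%N] =>
      first [ rewrite (_ : (u < v)%N = true); last by lia
            | rewrite (_ : (u < v)%N = false); last by lia ]
  | |- context [(?u == ?v :> nat)] =>
      first [ rewrite (_ : (u == v) = true); last by lia
            | rewrite (_ : (u == v) = false); last by lia ]
  end.

Local Ltac field_Rcoef :=
  rewrite /Scoef /Pcoef /Qcoef /Tcoef;
  repeat match goal with H : is_true (Dden _ _ _ != 0) |- _ => move: H end;
  rewrite /Dden !complex1B => *; field;
  by repeat match goal with H : is_true (_ != 0) |- _ => rewrite ?H; clear H end.

Lemma Rapply_inv xa xb h i j : Dden p xa xb != 0 -> Dden p xb xa != 0 ->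
  Rapply xb xa (Rapply xa xb h) i j = h i j.
Proof.
move=> Dab Dba; rewrite /Rapply /Rstay /Rswap.
by case: (ltngtP i j) => [?|?|/val_inj ?]; subst; decide_cmp; rewrite /=; field_Rcoef.
Qed.

Lemma R12_inv xa xb g a b c : Dden p xa xb != 0 -> Dden p xb xa != 0 ->
  R12 xb xa (R12 xa xb g) a b c = g a b c.
Proof. exact: (Rapply_inv (fun i j => g i j c)). Qed.

Lemma R23_inv xa xb g a b c : Dden p xa xb != 0 -> Dden p xb xa != 0 ->
  R23 xb xa (R23 xa xb g) a b c = g a b c.
Proof. exact: Rapply_inv. Qed.

Lemma R12_R23_braid xa xb xc g a b c :
  Dden p xa xb != 0 -> Dden p xa xc != 0 -> Dden p xb xc != 0 ->
  R12 xc xb (R23 xc xa (R12 xb xa g)) a b c =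
  R23 xb xa (R12 xc xa (R23 xc xb g)) a b c.
Proof.
move=> Dab Dac Dbc; rewrite /R12 /R23 /Rapply /Rstay /Rswap.
case: (ltngtP a b) => [?|?|/val_inj ?]; case: (ltngtP b c) => [?|?|/val_inj ?];
  case: (ltngtP a c) => [?|?|/val_inj ?]; subst; try (exfalso; lia); decide_cmp;
  rewrite /=; field_Rcoef.
Qed.

End TwoLetterAction.

Section KroneckerEntries.
Context {R : rcfType} {p : R} {N : nat}.
Local Notation C := R[i].
Local Notation I := (1%:M : 'M[C]_N).

Lemma mxnat_Rmx xb xa (i j k l : 'I_N) :
  mxnat (Rmx p N xb xa) (i * N + j) (k * N + l) =
  Rapply p xb xa (fun i' j' => ((k == i' :> nat) && (l == j' :> nat))%:R) i j.
Proof.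
have lt_ij := ltn_mulDl (ltn_ord i) (ltn_ord j).
have lt_kl := ltn_mulDl (ltn_ord k) (ltn_ord l).
rewrite (mxnat_lt _ lt_ij lt_kl) /Rmx mxE /= !divnMDl_small // !modnMDl_small //.
rewrite -/(Rstay p xb xa i j) -/(Rswap p xb xa i j) /Rapply /=.
case: ifP => [/andP[/eqP-> /eqP->]|not_ij].
  rewrite mulr1; case: (i =P j :> nat) => [->|/eqP/negbTE ne];
  by rewrite ?eqxx ?ne /= ?mulr0 addr0.
rewrite mulr0 add0r; case: ifP => [/andP[/eqP ekj /eqP eli]|_].
  by move: not_ij; rewrite ekj eli eq_sym andbb => ->; rewrite mulr1.
by case: ifP; rewrite ?mulr0.
Qed.

Lemma mxword_kronR1 {xb xa : C} y : (y < N * N * N)%N -> forall a b c : 'I_N,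
  mxword (kron (Rmx p N xb xa) I) y a b c = R12 p xb xa (wdelta y) a b c.
Proof.
move=> /idx3P[a' [b' [c' ->]]] a b c.
rewrite /mxword mxnat_kron ?idx3_lt // !idx3_divN !idx3_modN mxnat_Rmx mxnat1 //.
rewrite Rapply_mulr; apply: eq_Rapply => i j.
by rewrite /wdelta eq_idx3 -natrM mulnb andbA (eq_sym (nat_of_ord c)).
Qed.

Lemma mxword_kron1R {xb xa : C} y : (y < N * N * N)%N -> forall a b c : 'I_N,
  mxword (kron I (Rmx p N xb xa)) y a b c = R23 p xb xa (wdelta y) a b c.
Proof.
move=> /idx3P[a' [b' [c' ->]]] a b c.
rewrite /mxword mxnat_kron ?mulnA ?idx3_lt // !idx3_divNN !idx3_modNN mxnat_Rmx mxnat1 //.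
rewrite mulrC Rapply_mulr; apply: eq_Rapply => i j.
by rewrite /wdelta eq_idx3 -natrM mulnb andbC (eq_sym (nat_of_ord a)).
Qed.

Lemma mxword_kronR1_mul k {xb xa : C} (B : 'M[C]_(N * N * N, k)) y
    (g : 'I_N -> 'I_N -> 'I_N -> C) :
  (y < k)%N -> (forall a b c, mxword B y a b c = g a b c) -> forall a b c,
  mxword (kron (Rmx p N xb xa) I *m B) y a b c = R12 p xb xa g a b c.
Proof.
move=> lt_y eq_Bg a b c; rewrite /mxword mxnat_mul ?idx3_lt //.
rewrite (eq_bigr (fun z : 'I__ => R12 p xb xa (wdelta z) a b c * mxnat B z y)); last first.
  by move=> z _; rewrite -(mxword_kronR1 (ltn_ord z)).
rewrite Rapply_sum; apply: eq_Rapply => i j.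
by rewrite (sum_delta_nat (fun z => mxnat B z y)) ?idx3_lt //; apply: eq_Bg.
Qed.

Lemma mxword_kron1R_mul k {xb xa : C} (B : 'M[C]_(N * (N * N), k)) y
    (g : 'I_N -> 'I_N -> 'I_N -> C) :
  (y < k)%N -> (forall a b c, mxword B y a b c = g a b c) -> forall a b c,
  mxword (kron I (Rmx p N xb xa) *m B) y a b c = R23 p xb xa g a b c.
Proof.
move=> lt_y eq_Bg a b c; rewrite /mxword mxnat_mul ?mulnA ?idx3_lt //.
rewrite (eq_bigr (fun z : 'I__ => R23 p xb xa (wdelta z) a b c * mxnat B z y)); last first.
  by move=> z _; rewrite -mxword_kron1R // -mulnA.
rewrite Rapply_sum; apply: eq_Rapply => i j.
by rewrite (sum_delta_nat (fun z => mxnat B z y)) ?mulnA ?idx3_lt //; apply: eq_Bg.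
Qed.

End KroneckerEntries.

Theorem mainTheorem2 (R : rcfType) (p : R) (N : nat)
  (xa xb xc : R[i]) :
  0 < p -> p < 1 -> (3 <= N)%N ->
  xa != 0 -> xb != 0 -> xc != 0 ->
  (* all R-matrices among the three spectral variables are defined *)
  Dden p xa xb != 0 -> Dden p xb xa != 0 ->
  Dden p xa xc != 0 -> Dden p xc xa != 0 ->
  Dden p xb xc != 0 -> Dden p xc xb != 0 ->
  (* (a) unitarity *)
  (kron (Rmx p N xb xa) (1%:M : 'M_N) *m kron (Rmx p N xa xb) (1%:M : 'M_N)
     = 1%:M
   /\ kron (1%:M : 'M_N) (Rmx p N xb xa) *m kron (1%:M : 'M_N) (Rmx p N xa xb)
     = 1%:M)
  /\
  (* (b) Yang-Baxter equation *)
  kron (Rmx p N xc xb) (1%:M : 'M_N)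
    *m castmx (mulnA N N N, mulnA N N N) (kron (1%:M : 'M_N) (Rmx p N xc xa))
    *m kron (Rmx p N xb xa) (1%:M : 'M_N)
  = castmx (mulnA N N N, mulnA N N N)
      (kron (1%:M : 'M_N) (Rmx p N xb xa)
       *m castmx (esym (mulnA N N N), esym (mulnA N N N))
            (kron (Rmx p N xc xa) (1%:M : 'M_N))
       *m kron (1%:M : 'M_N) (Rmx p N xc xb)).
Proof.
(* Nothing beyond the nonvanishing of three of the six denominators is needed. *)
move=> _ _ _ _ _ _ Dab Dba Dac _ Dbc _; split; [split|].
- apply: (eq_mx_word (N := N)) => // y lt_y a b c.
  by rewrite (mxword_kronR1_mul lt_y (mxword_kronR1 lt_y)) R12_inv // mxword1.
- apply: (eq_mx_word (N := N)) => [|y lt_y a b c]; first exact: mulnA.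
  have lt_y' : (y < N * N * N)%N by rewrite -mulnA.
  by rewrite (mxword_kron1R_mul lt_y (mxword_kron1R lt_y')) R23_inv // mxword1 ?mulnA.
apply: (eq_mx_word (N := N)) => // y lt_y a b c.
have lt_y' : (y < N * (N * N))%N by rewrite mulnA.
rewrite -!mulmxA !mulmx_castmx mxword_castmx.
transitivity (R12 p xc xb (R23 p xc xa (R12 p xb xa (wdelta y))) a b c).
  apply: mxword_kronR1_mul => // a1 b1 c1; rewrite mxword_castmx.
  apply: mxword_kron1R_mul => // a2 b2 c2; rewrite mxword_castmx.
  exact: mxword_kronR1.
rewrite R12_R23_braid //; symmetry.
apply: mxword_kron1R_mul => // a1 b1 c1; rewrite mxword_castmx.
apply: mxword_kronR1_mul => // a2 b2 c2; rewrite mxword_castmx.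
exact: mxword_kron1R.
Qed.
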